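(* Let $F$ be a field with separable closure $F_s$ and absolute Galois group $\Gamma=\mathrm{Gal}(F_s/F)$. Let $W(D_4)\subset\mathrm{O}_4(\mathbb R)$ be the group of matrices $D\cdot P(\pi)$ with $D=\mathrm{diag}(\varepsilon_1,\dots,\varepsilon_4)$, $\varepsilon_i=\pm1$, $\prod\varepsilon_i=1$, $P(\pi)$ the permutation matrix of $\pi\in\mathfrak S_4$, and let $\tilde\mu$, $\tilde\rho$ be the trialitarian automorphisms given by conjugation by $$\mu=\tfrac12\begin{pmatrix}1&1&1&-1\\1&1&-1&1\\1&-1&1&1\\1&-1&-1&-1\end{pmatrix},\qquad \rho=\tfrac12\begin{pmatrix}-1&1&1&1\\-1&-1&1&-1\\-1&-1&-1&1\\-1&1&-1&-1\end{pmatrix}.$$ Let $\xi\in H^1(F,W(D_4))$ be a class fixed by $\tilde\mu_*$. Then there exists $\alpha\in\{\tilde\mu,\tilde\rho\}$ such that $\xi$ lies in the image of the map $H^1(F,\mathrm{Fix}(\alpha))\to H^1(F,W(D_4))$ induced by the inclusion $\mathrm{Fix}(\alpha)\subset W(D_4)$.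
   Context: For a finite group $G$ (with trivial $\Gamma$-action), $H^1(F,G)$ is the set of continuous homomorphisms $\Gamma\to G$ modulo conjugation by elements of $G$. An automorphism $\alpha$ of $W(D_4)$ acts on $H^1(F,W(D_4))$ by $\alpha_*[\varphi]=[\alpha\circ\varphi]$; this action depends only on the class of $\alpha$ modulo inner automorphisms. $\mathrm{Fix}(\alpha)=\{x\in W(D_4)\mid\alpha(x)=x\}$. A trialitarian automorphism is a non-inner automorphism of order $3$. *)

From HB Require Import structures.
From mathcomp Require Import all_boot all_order all_algebra all_fingroup all_field.

Set Implicit Arguments.
Unset Strict Implicit.
Unset Printing Implicit Defensive.

Import GRing.Theory.
Local Open Scope ring_scope.

Notation mx4 := 'M[rat]_4.

Definition mx_of_ints (s : seq (seq int)) : mx4 :=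
  \matrix_(i < 4, j < 4) ((nth 0%Z (nth [::] s i) j)%:~R : rat).

Definition WD4 : pred mx4 := fun A =>
  [exists s : 'S_4, exists e : {ffun 'I_4 -> bool},
     (\prod_(i < 4) (-1 : rat) ^+ e i == 1) &&
     (A == diag_mx (\row_(i < 4) (-1 : rat) ^+ e i) *m perm_mx s)].

Definition mu : mx4 :=
  (1 / 2 : rat) *: mx_of_ints
    [:: [:: 1; 1; 1; -1]; [:: 1; 1; -1; 1]; [:: 1; -1; 1; 1]; [:: 1; -1; -1; -1]]%Z.

Definition rho : mx4 :=
  (1 / 2 : rat) *: mx_of_ints
    [:: [:: -1; 1; 1; 1]; [:: -1; -1; 1; -1]; [:: -1; -1; -1; 1]; [:: -1; 1; -1; -1]]%Z.

Definition conjm (m : mx4) (A : mx4) : mx4 := m * A * m^-1.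

Definition mut : mx4 -> mx4 := conjm mu.
Definition rhot : mx4 -> mx4 := conjm rho.

Definition Fix (alpha : mx4 -> mx4) : pred mx4 := fun x => WD4 x && (alpha x == x).

Definition hom_into (gT : finGroupType) (G : {set gT}) (H : pred mx4)
    (phi : gT -> mx4) : Prop :=
  (forall x, x \in G -> H (phi x)) /\
  (forall x y, x \in G -> y \in G -> phi (x * y)%g = phi x * phi y).

(* phi and psi are conjugate by an element of W(D_4), i.e. define the same
   class in H^1(-, W(D_4)). *)
Definition W_conjugate (gT : finGroupType) (G : {set gT})
    (phi psi : gT -> mx4) : Prop :=
  exists2 g : mx4, WD4 g & forall x, x \in G -> psi x = g * phi x * g^-1.

(* A class fixed by mu~_* is represented by a homomorphism phi into W = W(D_4)
   such that mu phi(x) mu^-1 = g phi(x) g^-1 for some g in W, i.e. every phi(x)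
   commutes with c = g^-1 mu.  The fourth power of every element of the coset
   W mu is W-conjugate to mu or to rho, as a computation over the 192 elements of
   W shows.  So if w c^4 w^-1 = a with a in {mu, rho}, then the conjugate
   w phi w^-1 takes values in the centraliser of a in W, which is Fix(a~). *)

From HB Require Import structures.
From mathcomp Require Import all_boot all_order all_algebra all_fingroup all_field.

Set Implicit Arguments.
Unset Strict Implicit.
Unset Printing Implicit Defensive.

Import GRing.Theory.
Local Open Scope ring_scope.

Section SignedPermutationMatrices.

Variables (R : comNzRingType) (n : nat).
Implicit Types (s t : 'S_n) (e f : {ffun 'I_n -> bool}).

Definition sign_mx e : 'M[R]_n := diag_mx (\row_i (-1) ^+ e i).
Definition signed_perm_mx s e : 'M[R]_n := sign_mx e *m perm_mx s.
Definition sign_prod e : R := \prod_i (-1) ^+ e i.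

Lemma signed_perm_mxE s e i j :
  signed_perm_mx s e i j = (-1) ^+ e i * (s i == j)%:R.
Proof. by rewrite /signed_perm_mx /sign_mx mul_diag_mx !mxE. Qed.

Lemma signed_perm_mxM s e t f :
  signed_perm_mx s e *m signed_perm_mx t f =
  signed_perm_mx (s * t) [ffun i => e i (+) f (s i)].
Proof.
apply/matrixP=> i k; rewrite signed_perm_mxE ffunE permM signr_addb.
rewrite mxE (bigD1 (s i)) //= big1 => [|j sij]; last first.
  by rewrite !signed_perm_mxE eq_sym (negPf sij) mulr0 mul0r.
by rewrite !signed_perm_mxE eqxx mulr1 addr0 mulrA.
Qed.

Lemma signed_perm_mx1 : signed_perm_mx 1 [ffun => false] = 1%:M.
Proof.
by apply/matrixP=> i j; rewrite signed_perm_mxE ffunE perm1 mul1r !mxE.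
Qed.

Lemma sign_prodM s e f :
  sign_prod [ffun i => e i (+) f (s i)] = sign_prod e * sign_prod f.
Proof.
rewrite /sign_prod [X in _ * X](reindex_inj (@perm_inj _ s)) -big_split /=.
by apply: eq_bigr => i _; rewrite ffunE signr_addb.
Qed.

Lemma sign_prod_perm s e : sign_prod [ffun i => e (s i)] = sign_prod e.
Proof.
rewrite /sign_prod [RHS](reindex_inj (@perm_inj _ s)) /=.
by apply: eq_bigr => i _; rewrite ffunE.
Qed.

Lemma signed_perm_mxK s e :
  signed_perm_mx s e *m signed_perm_mx (s^-1)%g [ffun i => e ((s^-1)%g i)] = 1%:M.
Proof.
rewrite signed_perm_mxM mulgV -signed_perm_mx1; congr signed_perm_mx.
by apply/ffunP=> i; rewrite !ffunE permK addbb.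
Qed.

Lemma signed_perm_mxKV s e :
  signed_perm_mx (s^-1)%g [ffun i => e ((s^-1)%g i)] *m signed_perm_mx s e = 1%:M.
Proof.
rewrite signed_perm_mxM mulVg -signed_perm_mx1; congr signed_perm_mx.
by apply/ffunP=> i; rewrite !ffunE addbb.
Qed.

Lemma sign_prod_count e : sign_prod e = (-1) ^+ count e (enum 'I_n).
Proof.
rewrite /sign_prod -big_enum /=; elim: (enum _) => [|i r IHr]; first by rewrite big_nil.
by rewrite big_cons IHr /= exprD.
Qed.

End SignedPermutationMatrices.

Arguments signed_perm_mx {R n} s e.
Arguments sign_prod {R n} e.

Section UnitRingConjugation.

Variable R : unitRingType.
Implicit Types a c g m w x y : R.

Lemma unitr_of_expr_eq1 x n : x ^+ n.+1 = 1 -> x \is a GRing.unit.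
Proof. by move=> xn1; apply/unitrP; exists (x ^+ n); rewrite -exprSr -exprS xn1. Qed.

Lemma comm_of_conj_eq m g y :
    m \is a GRing.unit -> g \is a GRing.unit ->
  m * y * m^-1 = g * y * g^-1 -> GRing.comm y (g^-1 * m).
Proof.
move=> um ug conj_eq.
have := congr1 (fun z => g^-1 * z * m) conj_eq.
rewrite /= !mulrA (mulrVK um) (mulVr ug) mul1r => cy_yc.
by rewrite /GRing.comm mulrA cy_yc.
Qed.

Lemma conj_fixed_of_comm a c w y k :
    w \is a GRing.unit -> a \is a GRing.unit ->
    GRing.comm y c -> w * c ^+ k = a * w ->
  a * (w * y * w^-1) * a^-1 = w * y * w^-1.
Proof.
move=> uw ua cyc wca; have ak : a = w * c ^+ k * w^-1 by rewrite wca mulrK.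
suff -> : a * (w * y * w^-1) = w * y * w^-1 * a by rewrite mulrK.
rewrite ak !mulrA !(mulrVK uw) -(mulrA w (c ^+ k)) -(mulrA w y).
by rewrite (commrX k cyc).
Qed.

End UnitRingConjugation.

Lemma WD4P (A : mx4) :
  reflect (exists s e, sign_prod e = 1 :> rat /\ A = signed_perm_mx s e) (WD4 A).
Proof.
apply: (iffP existsP) => [[s /existsP[e /andP[/eqP e1 /eqP->]]] | [s [e [e1 ->]]]].
  by exists s, e.
by exists s; apply/existsP; exists e; rewrite -[X in X == 1]/(sign_prod e) e1 !eqxx.
Qed.

Lemma WD4M (A B : mx4) : WD4 A -> WD4 B -> WD4 (A * B).
Proof.
move=> /WD4P[s [e [e1 ->]]] /WD4P[t [f [f1 ->]]]; apply/WD4P.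
exists (s * t)%g, [ffun i => e i (+) f (s i)].
by rewrite sign_prodM e1 f1 mulr1 -signed_perm_mxM.
Qed.

Lemma WD4_unit_inv (A : mx4) : WD4 A -> A \is a GRing.unit /\ WD4 A^-1.
Proof.
move=> /WD4P[s [e [e1 ->]]]; set P := signed_perm_mx s e.
pose B : mx4 := signed_perm_mx (s^-1)%g [ffun i => e ((s^-1)%g i)].
have PB : P * B = 1 by apply: signed_perm_mxK.
have uP : P \is a GRing.unit by apply/unitrP; exists B; split=> //; apply: signed_perm_mxKV.
split=> //; apply/WD4P; exists (s^-1)%g, [ffun i => e ((s^-1)%g i)].
split; first by rewrite sign_prod_perm.
by rewrite -[RHS]mul1r -(mulVr uP) -mulrA PB mulr1.
Qed.

Lemma WD4_conj (w y : mx4) : WD4 w -> WD4 y -> WD4 (w * y * w^-1).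
Proof. by move=> Ww Wy; rewrite !WD4M // (WD4_unit_inv Ww).2. Qed.

Definition imat := seq (seq int).
Definition ient (A : imat) i j : int := nth 0%Z (nth [::] A i) j.
Definition imat_of (f : nat -> nat -> int) : imat := mkseq (fun i => mkseq (f i) 4) 4.
Definition imul (A B : imat) : imat :=
  imat_of (fun i j => foldr (fun k acc => ient A i k * ient B k j + acc) 0 (iota 0 4)).
Definition iscale (z : int) (A : imat) : imat := imat_of (fun i j => z * ient A i j).

Definition ipow4 (A : imat) : imat := let A2 := imul A A in imul A2 A2.
Definition id_ints : imat := imat_of (fun i j => (i == j)%:Z).

Lemma ient_imat_of f i j : (i < 4)%N -> (j < 4)%N -> ient (imat_of f) i j = f i j.
Proof. by move=> hi hj; rewrite /ient /imat_of !nth_mkseq. Qed.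

Lemma mx_of_intsE A (i j : 'I_4) : mx_of_ints A i j = (ient A i j)%:~R.
Proof. by rewrite mxE. Qed.

Lemma mx_of_ints_mul A B : mx_of_ints (imul A B) = mx_of_ints A * mx_of_ints B.
Proof.
apply/matrixP=> i j; rewrite mx_of_intsE ient_imat_of //= !mxE !big_ord_recl big_ord0 /=.
by rewrite !mx_of_intsE !intrD !intrM.
Qed.

Lemma mx_of_ints_scale z A : mx_of_ints (iscale z A) = z%:~R *: mx_of_ints A.
Proof. by apply/matrixP=> i j; rewrite !mxE -!/(ient _ _ _) ient_imat_of // intrM. Qed.

Lemma mx_of_ints_pow4 A : mx_of_ints (ipow4 A) = mx_of_ints A ^+ 4.
Proof. by rewrite !mx_of_ints_mul -!expr2 -exprM. Qed.

Lemma mx_of_ints_id : mx_of_ints id_ints = 1.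
Proof.
apply/matrixP=> i j; rewrite mx_of_intsE ient_imat_of // !mxE val_eqE.
by case: (i == j).
Qed.

Lemma half_int_mx_cube (A : imat) :
  imul A (imul A A) = iscale 8 id_ints -> ((1 / 2 : rat) *: mx_of_ints A) ^+ 3 = 1.
Proof.
move=> A3; rewrite exprZn [mx_of_ints A ^+ _]exprS expr2 -!mx_of_ints_mul A3.
by rewrite mx_of_ints_scale mx_of_ints_id scalerA scale1r.
Qed.

(* A code lists, row by row, the column of the nonzero entry of a signed
   permutation matrix and whether that entry is -1. *)
Definition code := seq (nat * bool).
Definition code_imat (c : code) : imat :=
  imat_of (fun i j => let p := nth (0%N, false) c i in if p.1 == j then (-1) ^+ p.2 else 0).
Definition valid_code (c : code) : bool :=
  [&& size c == 4%N, uniq (unzip1 c), all (fun p => p.1 < 4)%N c & ~~ odd (count snd c)].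
Definition signed_indices : seq (nat * bool) :=
  [seq (k, b) | k <- iota 0 4, b <- [:: false; true]].

Fixpoint all_codes (n : nat) : seq code :=
  if n is n'.+1 then [seq p :: c | p <- signed_indices, c <- all_codes n'] else [:: [::]].
Definition W_codes : seq code := filter valid_code (all_codes 4).

Definition code_of_perm (s : 'S_4) (e : {ffun 'I_4 -> bool}) : code :=
  [seq (val (s i), e i) | i <- enum 'I_4].

Lemma code_of_permE s e : mx_of_ints (code_imat (code_of_perm s e)) = signed_perm_mx s e.
Proof.
apply/matrixP=> i j; rewrite mx_of_intsE ient_imat_of // signed_perm_mxE.
rewrite (nth_map ord0) ?size_enum_ord // nth_ord_enum /=.
by rewrite val_eqE; case: (s i == j); case: (e i); rewrite ?mulr1 ?mulr0.
Qed.

Lemma valid_code_of_perm s e : valid_code (code_of_perm s e) = (sign_prod e == 1 :> rat).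
Proof.
rewrite /valid_code /unzip1 size_map size_enum_ord -map_comp map_inj_uniq ?enum_uniq; last first.
  by move=> x y /val_inj/perm_inj.
rewrite all_map (introT allP) => [|i _]; last exact: ltn_ord.
by rewrite count_map sign_prod_count -signr_odd; case: odd.
Qed.

Lemma code_of_perm_surj c : valid_code c -> exists s e, c = code_of_perm s e.
Proof.
case/and4P=> /eqP size_c uniq_c /allP lt_c _.
have lt_nth (i : 'I_4) : (nth 0%N (unzip1 c) i < 4)%N.
  by rewrite (nth_map (0%N, false)) ?size_c //; apply/lt_c/mem_nth; rewrite size_c.
have inj_f : injective (fun i => Ordinal (lt_nth i)).
  move=> i j /(congr1 val) /eqP /=.
  by rewrite nth_uniq ?size_map ?size_c // => /eqP /val_inj.
exists (perm inj_f), [ffun i : 'I_4 => (nth (0%N, false) c i).2].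
apply: (@eq_from_nth _ (0%N, false)) => [|i]; first by rewrite size_map size_enum_ord.
rewrite size_c => lt_i; have -> : i = Ordinal lt_i by [].
rewrite (nth_map ord0) ?size_enum_ord // nth_ord_enum permE ffunE /=.
by rewrite (nth_map (0%N, false)) ?size_c //; case: nth.
Qed.

Lemma mem_all_codes c : all (fun p => p.1 < 4)%N c -> c \in all_codes (size c).
Proof.
elim: c => [|[k b] c IHc] // /andP[/= lt_k lt_c].
change ((k, b) :: c \in [seq p :: c | p <- signed_indices, c <- all_codes (size c)]).
apply: allpairs_f (IHc lt_c).
by apply: allpairs_f; rewrite ?mem_iota //; case: b.
Qed.

Lemma mem_W_codes c : (c \in W_codes) = valid_code c.
Proof.
rewrite /W_codes mem_filter andb_idr // => /and4P[/eqP size_c _ lt_c _].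
by rewrite -size_c mem_all_codes.
Qed.

Lemma WD4_codeP A : WD4 A <-> exists2 c, c \in W_codes & A = mx_of_ints (code_imat c).
Proof.
split=> [/WD4P[s [e [e1 ->]]] | [c]].
  by exists (code_of_perm s e); rewrite ?code_of_permE // mem_W_codes valid_code_of_perm e1.
rewrite mem_W_codes => valid_c ->; have [s [e c_se]] := code_of_perm_surj valid_c.
rewrite c_se valid_code_of_perm in valid_c.
by rewrite c_se code_of_permE; apply/WD4P; exists s, e; split=> //; apply/eqP.
Qed.

Definition mu_ints : imat :=
  [:: [:: 1; 1; 1; -1]; [:: 1; 1; -1; 1]; [:: 1; -1; 1; 1]; [:: 1; -1; -1; -1]]%Z.
Definition rho_ints : imat :=
  [:: [:: -1; 1; 1; 1]; [:: -1; -1; 1; -1]; [:: -1; -1; -1; 1]; [:: -1; 1; -1; -1]]%Z.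

Lemma mu_rho_ints_cube :
  (imul mu_ints (imul mu_ints mu_ints) == iscale 8 id_ints) &&
  (imul rho_ints (imul rho_ints rho_ints) == iscale 8 id_ints).
Proof. by vm_compute. Qed.

Lemma mu_cube : mu ^+ 3 = 1.
Proof. by apply: half_int_mx_cube; apply/eqP; case/andP: mu_rho_ints_cube. Qed.

Lemma rho_cube : rho ^+ 3 = 1.
Proof. by apply: half_int_mx_cube; apply/eqP; case/andP: mu_rho_ints_cube. Qed.

(* Since mu = M / 2, the identity w (g mu)^4 = mu w reads W (G M)^4 = 8 M W. *)
Definition coset_pow4_check : bool :=
  all (fun g => let C4 := ipow4 (imul (code_imat g) mu_ints) in
    has (fun w => let Wm := code_imat w in
      (imul Wm C4 == iscale 8 (imul mu_ints Wm)) || (imul Wm C4 == iscale 8 (imul rho_ints Wm)))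
      W_codes) W_codes.

Lemma coset_pow4_checkP : coset_pow4_check.
Proof. by vm_compute. Qed.

Lemma coset_mu_pow4_conj (g : mx4) :
  WD4 g -> exists2 w, WD4 w & w * (g * mu) ^+ 4 = mu * w \/ w * (g * mu) ^+ 4 = rho * w.
Proof.
move=> /WD4_codeP[c Wc ->].
have /allP/(_ c Wc)/hasP[d Wd sol] := coset_pow4_checkP.
exists (mx_of_ints (code_imat d)); first by apply/WD4_codeP; exists d.
have scaled A : imul (code_imat d) (ipow4 (imul (code_imat c) mu_ints)) =
    iscale 8 (imul A (code_imat d)) ->
  mx_of_ints (code_imat d) * (mx_of_ints (code_imat c) * mu) ^+ 4 =
  (1 / 2 : rat) *: mx_of_ints A * mx_of_ints (code_imat d).
  move=> dA; rewrite -scalerAr exprZn -scalerAr -mx_of_ints_mul -mx_of_ints_pow4.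
  by rewrite -mx_of_ints_mul dA mx_of_ints_scale mx_of_ints_mul !scalerA -scalerAl.
by case/orP: sol => /eqP /scaled; [left | right].
Qed.

Theorem theorem6p1 (F : fieldType) (L : splittingFieldType F) (E : {subfield L})
    (hE : galois 1%VS E) (phi : gal_of E -> 'M[rat]_4) :
  hom_into ('Gal(E / 1%VS))%g WD4 phi ->
  W_conjugate ('Gal(E / 1%VS))%g phi (fun x => mut (phi x)) ->
  exists2 alpha : 'M[rat]_4 -> 'M[rat]_4,
    alpha = mut \/ alpha = rhot &
    exists psi : gal_of E -> 'M[rat]_4,
      hom_into ('Gal(E / 1%VS))%g (Fix alpha) psi /\
      W_conjugate ('Gal(E / 1%VS))%g phi psi.
Proof.
move=> [Wphi phiM] [g /WD4_unit_inv[ug Wg_inv] conj_g].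
have [w Ww pow4] := coset_mu_pow4_conj Wg_inv.
have [uw _] := WD4_unit_inv Ww.
have [a [a_mu_rho ua wca]] :
    exists a, [/\ a = mu \/ a = rho, a \is a GRing.unit & w * (g^-1 * mu) ^+ 4 = a * w].
  case: pow4 => wca; [exists mu | exists rho].
    by split; [left | exact: unitr_of_expr_eq1 mu_cube |].
  by split; [right | exact: unitr_of_expr_eq1 rho_cube |].
exists (conjm a); first by case: a_mu_rho => ->; [left | right].
exists (fun x => w * phi x * w^-1); split; last by exists w.
split=> [x Gx | x y Gx Gy]; last by rewrite phiM // !mulrA (mulrVK uw).
apply/andP; split; first exact: WD4_conj (Wphi x Gx).
apply/eqP; apply: conj_fixed_of_comm uw ua _ wca.
exact: comm_of_conj_eq (unitr_of_expr_eq1 mu_cube) ug (conj_g x Gx).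
Qed.
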